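(* Let $K$ be a field with pairwise commuting derivations $\frac{d}{dx_1},\dots,\frac{d}{dx_k}$ and field of constants $C$. Give $K(\partial_1,\dots,\partial_k)$ the language $\{0,1,+,\cdot,\partial_1,\dots,\partial_k\}$ and $C(t_1,\dots,t_k)$ the language $\{0,1,+,\cdot,t_1,\dots,t_k\}$. Then the $C$-algebra homomorphism $\phi:C(t_1,\dots,t_k)\to K(\partial_1,\dots,\partial_k)$ with $\phi(t_i)=\partial_i$ is an effective Diophantine map.
   Context: The field of constants is $C=\{f\in K\mid \frac{d}{dx_1}f=\dots=\frac{d}{dx_k}f=0\}$. $K[\partial_1,\dots,\partial_k]$ is the ring of differential polynomials with usual addition and multiplication determined by $\partial_i\partial_j=\partial_j\partial_i$ and $\partial_ia=a\partial_i+\frac{d}{dx_i}(a)$ for $a\in K$; it satisfies the left Ore condition and $K(\partial_1,\dots,\partial_k)$ denotes its left division ring of fractions. For a set $R$ with language $\mathcal{L}$ (constants, functions, relations incl. $0$ and $=$), $S\subset R^m$ is Diophantine if $S=\{\vec x\mid\exists\vec y\ (f_1\wedge\dots\wedge f_r)\}$ with basic formulas $f_i$ of the form $(t_1,\dots,t_l)\in S'$, $S'$ a relation or equality and $t_j$ terms of $\mathcal{L}$. A map $d:R_1\to R_2$ is Diophantine if coordinatewise images of Diophantine sets are Diophantine; it is effective if a Diophantine definition of $d(S)$ can be algorithmically computed from one of $S$. *)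

From HB Require Import structures.
From mathcomp Require Import all_boot all_order all_algebra.
From mathcomp Require Import fraction.
From mathcomp Require Import mpoly.

Set Implicit Arguments.
Unset Strict Implicit.
Unset Printing Implicit Defensive.

Import GRing.Theory.
Local Open Scope ring_scope.

Definition commuting_derivations (K : fieldType) (k : nat) (d : 'I_k -> K -> K) :=
  [/\ forall i x y, d i (x + y) = d i x + d i y,
      forall i x y, d i (x * y) = d i x * y + x * d i y
    & forall i j x, d i (d j x) = d j (d i x)].

(* A differential polynomial sum_alpha a_alpha d^alpha is encoded by the *)
(* K-polynomial with coefficients a_alpha ; dpol_eval gives its value in *)
(* D (coefficients written on the left).                               *)

Definition dpol_eval (K : fieldType) (D : unitRingType) (k : nat)
  (iota : K -> D) (dd : 'I_k -> D) (p : {mpoly K[k]}) : D :=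
  \sum_(m <- msupp p) iota (p@_m) * \prod_(i < k) dd i ^+ m i.

(* D, together with iota : K -> D and dd_1..dd_k, is (a copy of) the left
   division ring of fractions K(d_1,...,d_k) of K[d_1,...,d_k]:
   - D is a division ring, iota a ring morphism;
   - the dd_i commute and dd_i * a = a * dd_i + (d/dx_i)(a);
   - the monomials dd^alpha are left K-linearly independent (so the subring
     { dpol_eval p } is the ring K[d_1..d_k] of differential polynomials);
   - every element of D is a left fraction q^-1 * p of differential polynomials
     (classical left ring of quotients). *)
Definition left_Ore_diff_fractions (K : fieldType) (k : nat) (d : 'I_k -> K -> K)
  (D : unitRingType) (iota : {rmorphism K -> D}) (dd : 'I_k -> D) :=
  [/\ forall x : D, x != 0 -> x \is a GRing.unit,
      forall i j, dd i * dd j = dd j * dd i,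
      forall i a, dd i * iota a = iota a * dd i + iota (d i a),
      forall p : {mpoly K[k]}, dpol_eval iota dd p = 0 -> p = 0
    & forall z : D, exists p q : {mpoly K[k]},
        q != 0 /\ z = (dpol_eval iota dd q)^-1 * dpol_eval iota dd p].

Inductive term (k : nat) : Type :=
| TVar of nat
| TZero
| TOne
| TCst of 'I_k
| TAdd of term k & term k
| TMul of term k & term k.

Section TermCount.
Variable k : nat.

Fixpoint term_enc (t : term k) : GenTree.tree (nat + 'I_k) :=
  match t with
  | TVar n => GenTree.Leaf (inl n)
  | TZero => GenTree.Node 0 [::]
  | TOne => GenTree.Node 1 [::]
  | TCst i => GenTree.Leaf (inr i)
  | TAdd a b => GenTree.Node 2 [:: term_enc a; term_enc b]
  | TMul a b => GenTree.Node 3 [:: term_enc a; term_enc b]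
  end.

Fixpoint term_dec (t : GenTree.tree (nat + 'I_k)) : option (term k) :=
  match t with
  | GenTree.Leaf (inl n) => Some (TVar k n)
  | GenTree.Leaf (inr i) => Some (TCst i)
  | GenTree.Node 0 [::] => Some (TZero k)
  | GenTree.Node 1 [::] => Some (TOne k)
  | GenTree.Node 2 [:: a; b] =>
      match term_dec a, term_dec b with
      | Some a', Some b' => Some (TAdd a' b')
      | _, _ => None
      end
  | GenTree.Node 3 [:: a; b] =>
      match term_dec a, term_dec b with
      | Some a', Some b' => Some (TMul a' b')
      | _, _ => None
      end
  | _ => None
  end.

Lemma term_encK : pcancel term_enc term_dec.
Proof. by elim=> //= [a -> b ->|a -> b ->]. Qed.

HB.instance Definition _ := Countable.copy (term k) (pcan_type term_encK).

End TermCount.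

Fixpoint teval (R : nzRingType) (k : nat) (c : 'I_k -> R) (env : nat -> R)
  (t : term k) : R :=
  match t with
  | TVar n => env n
  | TZero => 0
  | TOne => 1
  | TCst i => c i
  | TAdd a b => teval c env a + teval c env b
  | TMul a b => teval c env a * teval c env b
  end.

(* A Diophantine definition (for subsets of R^m) is a finite list of
   equations t = t'; variables 0..m-1 are the free variables x_0..x_{m-1},
   all other variables are existentially quantified. *)
Definition dioph_def (k : nat) := seq (term k * term k).

Definition dioph_sat (R : nzRingType) (k : nat) (c : 'I_k -> R) (m : nat)
  (E : dioph_def k) (x : 'I_m -> R) : Prop :=
  exists y : nat -> R,
    let env := fun j : nat =>
      match @insub nat (fun j => j < m)%N 'I_m j with
      | Some i => x i
      | None => y j
      end in
    forall e, e \in E -> teval c env e.1 = teval c env e.2.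

Definition is_diophantine (R : nzRingType) (k : nat) (c : 'I_k -> R) (m : nat)
  (S : ('I_m -> R) -> Prop) : Prop :=
  exists E : dioph_def k, forall x, S x <-> dioph_sat c E x.

Definition cw_image (R1 R2 : Type) (f : R1 -> R2) (m : nat)
  (S : ('I_m -> R1) -> Prop) : ('I_m -> R2) -> Prop :=
  fun z => exists x, S x /\ forall i, z i = f (x i).

Definition diophantine_map (R1 R2 : nzRingType) (k1 k2 : nat)
  (c1 : 'I_k1 -> R1) (c2 : 'I_k2 -> R2) (f : R1 -> R2) : Prop :=
  forall m (S : ('I_m -> R1) -> Prop),
    is_diophantine c1 S -> is_diophantine c2 (cw_image f S).

Inductive prcode : Type :=
| PZero
| PSucc
| PProj of nat
| PComp of prcode & seq prcode
| PRec of prcode & prcode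
| PMin of prcode.

Inductive preval : prcode -> seq nat -> nat -> Prop :=
| ev_zero v : preval PZero v 0
| ev_succ x v : preval PSucc (x :: v) x.+1
| ev_proj i v : preval (PProj i) v (nth 0%N v i)
| ev_comp f gs v ys z :
    prevals gs v ys -> preval f ys z -> preval (PComp f gs) v z
| ev_rec0 f g v z : preval f v z -> preval (PRec f g) (0%N :: v) z
| ev_recS f g n v z w :
    preval (PRec f g) (n :: v) z -> preval g (n :: z :: v) w ->
    preval (PRec f g) (n.+1 :: v) w
| ev_min f v n :
    preval f (n :: v) 0%N ->
    (forall j, (j < n)%N -> exists z, (0 < z)%N /\ preval f (j :: v) z) ->
    preval (PMin f) v n
with prevals : seq prcode -> seq nat -> seq nat -> Prop :=
| evs_nil v : prevals [::] v [::]
| evs_cons g gs v y ys :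
    preval g v y -> prevals gs v ys -> prevals (g :: gs) v (y :: ys).

(* The map f is effective: there is an algorithm (a mu-recursive function,
   acting on the standard countable encodings [pickle]) computing, from
   (m, E) with E a Diophantine definition of S in R1^m, a Diophantine
   definition of the coordinatewise image f(S) in R2^m. *)
Definition effective_map (R1 R2 : nzRingType) (k1 k2 : nat)
  (c1 : 'I_k1 -> R1) (c2 : 'I_k2 -> R2) (f : R1 -> R2) : Prop :=
  exists e : prcode, forall (m : nat) (E : dioph_def k1),
    exists E' : dioph_def k2,
      preval e [:: pickle (m, E)] (pickle E') /\
      forall z : 'I_m -> R2,
        cw_image f (dioph_sat c1 (m:=m) E) z <-> dioph_sat c2 E' z.

Notation "x %:F" := (@FracField.tofrac _ x) : ring_scope.

From HB Require Import structures.
From mathcomp Require Import all_boot all_order all_algebra.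
From mathcomp Require Import fraction.
From mathcomp Require Import mpoly.
From mathcomp Require Import bigenough.

(** The image of [phi] is exactly the centralizer of the [d_i] in [K(d)].  If
    [z = q^-1 p] commutes with every [d_i], the left denominators [q] of [z]
    (those with [q z] a differential polynomial) are closed under scaling by [K]
    and under [q |-> d_i q - q d_i], which differentiates the coefficients of [q];
    after normalising one coefficient to [1] this strictly shrinks the support,
    so some denominator, and then its numerator, has constant coefficients.
    Consequently a tuple lies in [phi(S)] iff it satisfies the equations of [S]
    read in [K(d)], together with [x d_i = d_i x] for every variable [x] of the
    system.  All these variables are below the code [N] of [(m, E)], and the new
    system is computed from [N] by a primitive recursion, after recovering [E]
    from [N] by minimisation. *)

Set Implicit Arguments.
Unset Strict Implicit.
Unset Printing Implicit Defensive.

Import GRing.Theory BigEnough.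
Local Open Scope ring_scope.

(** * Differential polynomials and the centralizer of the derivations *)

Section CoefficientwiseDerivation.
Variables (K : fieldType) (k : nat) (d : 'I_k -> K -> K).
Hypothesis Hd : commuting_derivations d.

Lemma derivation0 i : d i 0 = 0.
Proof.
case: Hd => dD _ _; apply: (@addrI _ (d i 0)).
by rewrite -dD !addr0.
Qed.

Lemma derivation1 i : d i 1 = 0.
Proof.
case: Hd => _ dM _; apply: (@addrI _ (d i 1)).
by have := dM i 1 1; rewrite !mul1r mulr1 addr0 => <-.
Qed.

Lemma derivation_is_additive i : additive (d i).
Proof.
case: Hd => dD _ _ x y; apply: (@addIr _ (d i y)).
by rewrite -dD subrK addrNK.
Qed.

Definition derivation_additive i : {additive K -> K} :=
  HB.pack (d i) (GRing.isAdditive.Build K K (d i) (derivation_is_additive i)).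

Lemma mcoeff_map_derivation i (p : {mpoly K[k]}) m :
  (map_mpoly (d i) p)@_m = d i p@_m.
Proof. exact: (mcoeff_map_mpoly (derivation_additive i)). Qed.

Lemma msupp_map_derivation i (p : {mpoly K[k]}) :
  {subset msupp (map_mpoly (d i) p) <= msupp p}.
Proof.
move=> m; rewrite !mcoeff_msupp mcoeff_map_derivation.
by apply: contra => /eqP ->; rewrite derivation0.
Qed.

Lemma exists_constant_coefficients (P : {mpoly K[k]} -> Prop) :
    (forall c p, P p -> P (c *: p)) ->
    (forall i p, P p -> P (map_mpoly (d i) p)) ->
  forall q, q != 0 -> P q ->
  exists2 q', q' != 0 & P q' /\ forall i, map_mpoly (d i) q' = 0.
Proof.
move=> PZ Pd q; have [n] := ubnP (size (msupp q)).
elim: n q => // n IH q lt_q_n nz_q Pq.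
have m0_q : mlead q \in msupp q by rewrite mcoeff_msupp mleadc_eq0.
pose q' := (q@_(mlead q))^-1 *: q.
have q'_m0 : q'@_(mlead q) = 1 by rewrite mcoeffZ mulVf // -mcoeff_msupp.
have nz_q' : q' != 0 by apply: contra_eq_neq q'_m0 => ->; rewrite mcoeff0 eq_sym oner_eq0.
have [/forallP q'_const|] := boolP [forall i, map_mpoly (d i) q' == 0].
  by exists q' => //; split; [exact: PZ | move=> i; apply/eqP].
rewrite negb_forall => /existsP [i nz_dq']; apply: (IH _ _ nz_dq'); last exact/Pd/PZ.
rewrite -ltnS; apply: leq_trans lt_q_n; rewrite ltnS.
apply: (@uniq_leq_size _ (mlead q :: _)).
  by rewrite /= msupp_uniq andbT mcoeff_msupp mcoeff_map_derivation q'_m0 derivation1 eqxx.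
move=> m; rewrite in_cons => /predU1P [-> //|/msupp_map_derivation].
exact: msuppZ_le.
Qed.

End CoefficientwiseDerivation.

Section DifferentialPolynomials.
Variables (K : fieldType) (k : nat) (d : 'I_k -> K -> K).
Variables (D : unitRingType) (iota : {rmorphism K -> D}) (dd : 'I_k -> D).
Hypothesis Hd : commuting_derivations d.
Hypothesis HD : left_Ore_diff_fractions d iota dd.

Local Notation dpol := (dpol_eval iota dd).

Lemma dpol_evalE p : dpol p = mmap iota dd p.
Proof. by []. Qed.

Lemma dpol_evalZ c p : dpol (c *: p) = iota c * dpol p.
Proof. exact: mmapZ. Qed.

Lemma dpol_eval_eq0 p : (dpol p == 0) = (p == 0).
Proof.
case: HD => _ _ _ dpol_inj _; apply/eqP/eqP => [/dpol_inj //|->].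
by rewrite dpol_evalE raddf0.
Qed.

Lemma dpol_eval_unit p : p != 0 -> dpol p \is a GRing.unit.
Proof. by case: HD => unitD _ _ _ _; rewrite -dpol_eval_eq0; apply: unitD. Qed.

Lemma dpol_eval_commutator i p :
  dd i * dpol p - dpol p * dd i = dpol (map_mpoly (d i) p).
Proof.
case: HD => _ dd_comm dd_iota _ _.
have dd_mmap1 m : GRing.comm (dd i) (mmap1 dd m).
  by apply: commr_prod => j _; apply: commrX; apply: dd_comm.
rewrite !dpol_evalE; pose_big_enough n.
  rewrite !(mmapE n) // mulr_sumr mulr_suml -sumrB; apply: eq_bigr => m _.
  by rewrite mulrA dd_iota mulrDl -!mulrA dd_mmap1 addrAC subrr add0r
    mcoeff_map_derivation.
by close.
Qed.

End DifferentialPolynomials.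

Section ConstantCoefficients.
Variables (K : fieldType) (k : nat) (d : 'I_k -> K -> K).
Hypothesis Hd : commuting_derivations d.
Variables (Cf : fieldType) (gamma : {rmorphism Cf -> K}).
Hypothesis HC : forall x : K, (forall i, d i x = 0) <-> exists c : Cf, gamma c = x.

Lemma constant_coefficients_mpoly (p : {mpoly K[k]}) :
  (forall i, map_mpoly (d i) p = 0) -> exists pc, map_mpoly gamma pc = p.
Proof.
move=> p_const; rewrite [p]mpolyE.
elim: (msupp p) => [|m s [pc IH]]; first by exists 0; rewrite !big_nil raddf0.
have [c gamma_c] : exists c, gamma c = p@_m.
  by apply/HC => i; rewrite -(mcoeff_map_derivation Hd) p_const mcoeff0.
exists (c *: 'X_[m] + pc); rewrite big_cons raddfD /=.
by rewrite (map_mpolyZ gamma) (map_mpolyX gamma) gamma_c IH.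
Qed.

Variables (D : unitRingType) (iota : {rmorphism K -> D}) (dd : 'I_k -> D).
Hypothesis HD : left_Ore_diff_fractions d iota dd.
Variable phi : {rmorphism {fraction {mpoly Cf[k]}} -> D}.
Hypothesis Hphi_C : forall c : Cf, phi ((c%:MP : {mpoly Cf[k]})%:F) = iota (gamma c).
Hypothesis Hphi_t : forall i : 'I_k, phi (('X_i : {mpoly Cf[k]})%:F) = dd i.

Local Notation dpol := (dpol_eval iota dd).

Lemma phi_tofrac (pc : {mpoly Cf[k]}) : phi pc%:F = dpol (map_mpoly gamma pc).
Proof.
rewrite [in LHS](mpolyE pc) dpol_evalE /mmap.
rewrite (perm_big _ (msupp_map_mpoly _ (fmorph_inj gamma))) rmorph_sum rmorph_sum.
apply: eq_bigr => m _.
rewrite -mul_mpolyC !rmorphM /= Hphi_C mpolyXE_id !rmorph_prod mcoeff_map_mpoly.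
by congr (_ * _); apply: eq_bigr => i _; rewrite !rmorphXn Hphi_t.
Qed.

Lemma centralizer_sub_image z : (forall i, z * dd i = dd i * z) -> exists f, phi f = z.
Proof.
move=> z_comm.
have [p0 [q0 [nz_q0 z_def]]] : exists p q : {mpoly K[k]},
    q != 0 /\ z = (dpol q)^-1 * dpol p by case: HD.
pose I q := exists r, dpol q * z = dpol r.
have Iq0 : I q0.
  by exists p0; rewrite z_def mulrA mulrV ?mul1r // (dpol_eval_unit HD nz_q0).
have IZ c q : I q -> I (c *: q).
  by case=> r qz; exists (c *: r); rewrite !dpol_evalZ -mulrA qz.
have Id i q : I q -> I (map_mpoly (d i) q).
  case=> r qz; exists (map_mpoly (d i) r).
  by rewrite -!(dpol_eval_commutator Hd HD) -qz mulrBl -!mulrA z_comm !mulrA.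
have [q nz_q [[r qz] q_const]] := exists_constant_coefficients Hd IZ Id nz_q0 Iq0.
have r_const i : map_mpoly (d i) r = 0.
  apply/eqP; rewrite -(dpol_eval_eq0 HD) -(dpol_eval_commutator Hd HD) -qz.
  by rewrite -mulrA z_comm !mulrA -mulrBl (dpol_eval_commutator Hd HD) q_const
    dpol_evalE raddf0 mul0r.
have [qc qcE] := constant_coefficients_mpoly q_const.
have [rc rcE] := constant_coefficients_mpoly r_const.
have unit_q := dpol_eval_unit HD nz_q.
have nz_qc : qc%:F != 0.
  by apply: contraTneq unit_q => qc0; rewrite -qcE -phi_tofrac qc0 rmorph0 unitr0.
exists ((qc%:F)^-1 * rc%:F).
by rewrite rmorphM rmorphV ?unitfE // !phi_tofrac qcE rcE -qz mulKr.
Qed.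

End ConstantCoefficients.

(** * Images of Diophantine sets *)

Section Terms.
Variable k : nat.

Fixpoint tvars (t : term k) : seq nat :=
  match t with
  | TVar n => [:: n]
  | TAdd a b | TMul a b => tvars a ++ tvars b
  | _ => [::]
  end.

Lemma eq_teval (R : nzRingType) (c : 'I_k -> R) env env' t :
  {in tvars t, env =1 env'} -> teval c env t = teval c env' t.
Proof.
elim: t => //= [n|a IHa b IHb|a IHa b IHb] eq_env; first by apply: eq_env; rewrite mem_head.
- by rewrite IHa ?IHb // => v vt; apply: eq_env; rewrite mem_cat vt ?orbT.
- by rewrite IHa ?IHb // => v vt; apply: eq_env; rewrite mem_cat vt ?orbT.
Qed.

Lemma rmorph_teval (R S : nzRingType) (f : {rmorphism R -> S}) (c : 'I_k -> R)
    (c' : 'I_k -> S) env t :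
  f \o c =1 c' -> f (teval c env t) = teval c' (f \o env) t.
Proof.
move=> f_c; elim: t => /= [n|||i|a IHa b IHb|a IHa b IHb];
  by rewrite ?rmorph0 ?rmorph1 ?rmorphD ?rmorphM ?IHa ?IHb ?f_c //; apply: f_c.
Qed.

Definition commutation_eqn (n : nat) (i : 'I_k) : term k * term k :=
  (TMul (TVar k n) (TCst i), TMul (TCst i) (TVar k n)).

Fixpoint commutation_eqns (N : nat) : dioph_def k :=
  if N is n.+1 then [seq commutation_eqn n i | i <- enum 'I_k] ++ commutation_eqns n
  else [::].

Lemma mem_commutation_eqns N e :
  e \in commutation_eqns N <-> exists2 n, (n < N)%N & exists i, e = commutation_eqn n i.
Proof.
elim: N => [|N IH] /=; first by split=> // -[].
rewrite mem_cat; split=> [/orP[/mapP[i _ ->]|/IH[n ltnN e_n]]|[n + [i e_n]]].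
- by exists N => //; exists i.
- by exists n => //; apply: ltnW.
rewrite ltnS leq_eqVlt => /predU1P[n_N|ltnN]; apply/orP.
  by left; rewrite e_n n_N; apply: map_f; rewrite mem_enum.
by right; apply/IH; exists n => //; exists i.
Qed.

End Terms.

Definition dioph_env (R : Type) (m : nat) (x : 'I_m -> R) (y : nat -> R) (j : nat) : R :=
  if @insub nat (fun j => j < m)%N 'I_m j is Some i then x i else y j.

Lemma dioph_satE (R : nzRingType) (k : nat) (c : 'I_k -> R) (m : nat) E x :
  dioph_sat c (m := m) E x <->
  exists y, forall e, e \in E ->
    teval c (dioph_env x y) e.1 = teval c (dioph_env x y) e.2.
Proof. by []. Qed.

Lemma dioph_env_ord (R : Type) m (x : 'I_m -> R) y (i : 'I_m) : dioph_env x y i = x i.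
Proof. by rewrite /dioph_env valK. Qed.

Lemma dioph_env_comp (R S : Type) (f : R -> S) m (x : 'I_m -> R) (z : 'I_m -> S) y :
  z =1 f \o x -> dioph_env z (f \o y) =1 f \o dioph_env x y.
Proof. by move=> zx j; rewrite /dioph_env /=; case: insubP. Qed.

Section DiophantineImage.
Variables (k : nat) (R : comNzRingType) (S : nzRingType).
Variables (c : 'I_k -> R) (c' : 'I_k -> S) (f : {rmorphism R -> S}).
Hypothesis f_c : f \o c =1 c'.
Hypothesis f_inj : injective f.
Hypothesis f_onto_centralizer :
  forall z, (forall i, z * c' i = c' i * z) -> exists x, f x = z.

Lemma dioph_sat_image m N E (x : 'I_m -> R) z :
  z =1 f \o x -> dioph_sat c E x -> dioph_sat c' (commutation_eqns k N ++ E) z.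
Proof.
move=> zx /dioph_satE[y Ey]; apply/dioph_satE; exists (f \o y) => e.
rewrite !(eq_teval _ (in1W (dioph_env_comp y zx))).
rewrite mem_cat => /orP[/mem_commutation_eqns[n _ [i ->]]|eE] /=.
  by rewrite -f_c /= -!rmorphM mulrC.
by rewrite -!(rmorph_teval _ _ f_c) Ey.
Qed.

Lemma dioph_sat_preimage m N E (z : 'I_m -> S) :
    (m <= N)%N -> (forall e v, e \in E -> v \in tvars e.1 ++ tvars e.2 -> v < N)%N ->
    dioph_sat c' (commutation_eqns k N ++ E) z ->
  exists x, dioph_sat c E x /\ z =1 f \o x.
Proof.
move=> leq_mN vars_E /dioph_satE[y Ey]; set env := dioph_env z y in Ey.
have env_comm j : (j < N)%N -> forall i, env j * c' i = c' i * env j.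
  move=> ltjN i; apply: (Ey (commutation_eqn j i)).
  by rewrite mem_cat; apply/orP; left; apply/mem_commutation_eqns; exists j => //; exists i.
have pre_env j : exists w, (j < N)%N ==> (f w == env j).
  have [/env_comm/f_onto_centralizer[w <-]|_] := boolP (j < N)%N; last by exists 0.
  by exists w; rewrite eqxx.
pose w j := xchoose (pre_env j).
have f_w j : (j < N)%N -> f (w j) = env j.
  by move=> ltjN; apply/eqP; move/implyP: (xchooseP (pre_env j)); apply.
have z_w (i : 'I_m) : z i = f (w i).
  by rewrite f_w ?(leq_trans (ltn_ord i)) // /env dioph_env_ord.
exists (w \o val); split=> //; apply/dioph_satE; exists w => e eE; apply: f_inj.
have env_w v : v \in tvars e.1 ++ tvars e.2 -> (f \o dioph_env (w \o val) w) v = env v.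
  move=> vE; rewrite /= -f_w; last exact: vars_E vE.
  by rewrite /dioph_env; case: insubP => // i _ <-.
rewrite !(rmorph_teval _ _ f_c) !(eq_teval _ (env' := env)) => [|v ve|v ve].
- by apply: Ey; rewrite mem_cat eE orbT.
- by apply: env_w; rewrite mem_cat ve orbT.
- by apply: env_w; rewrite mem_cat ve.
Qed.

Lemma cw_image_dioph_sat m N E (z : 'I_m -> S) :
    (m <= N)%N -> (forall e v, e \in E -> v \in tvars e.1 ++ tvars e.2 -> v < N)%N ->
  cw_image f (dioph_sat c E) z <-> dioph_sat c' (commutation_eqns k N ++ E) z.
Proof.
move=> leq_mN vars_E; split=> [[x [Ex zx]]|/dioph_sat_preimage[] // x [Ex zx]].
  exact: dioph_sat_image zx Ex.
by exists x.
Qed.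

End DiophantineImage.

(** * Effectiveness *)

Section PartialRecursiveFunctions.
Local Open Scope nat_scope.

Definition computes (c : prcode) (F : seq nat -> nat) := forall v, preval c v (F v).

Lemma computes_zero : computes PZero (fun _ => 0).
Proof. exact: ev_zero. Qed.

Lemma computes_proj i : computes (PProj i) (nth 0 ^~ i).
Proof. exact: ev_proj. Qed.

Lemma computes_op1 f (op : nat -> nat) a A :
    (forall x, preval f [:: x] (op x)) -> computes a A ->
  computes (PComp f [:: a]) (fun v => op (A v)).
Proof. by move=> Hf Ha v; apply: ev_comp (Hf _); apply: evs_cons (evs_nil _). Qed.

Lemma computes_op2 f (op : nat -> nat -> nat) a b A B :
    (forall x y, preval f [:: x; y] (op x y)) -> computes a A -> computes b B ->
  computes (PComp f [:: a; b]) (fun v => op (A v) (B v)).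
Proof.
move=> Hf Ha Hb v; apply: ev_comp (Hf _ _).
by apply: evs_cons => //; apply: evs_cons (evs_nil _).
Qed.

Lemma computes_succ a A : computes a A -> computes (PComp PSucc [:: a]) (fun v => (A v).+1).
Proof. exact: computes_op1 (ev_succ^~ [::]). Qed.

Fixpoint primrec (b : nat) (G : seq nat -> nat) (n : nat) (v : seq nat) : nat :=
  if n is n'.+1 then G [:: n', primrec b G n' v & v] else b.

Lemma primrec0 b G v : primrec b G 0 v = b.
Proof. by []. Qed.

Lemma primrecS b G n v : primrec b G n.+1 v = G [:: n, primrec b G n v & v].
Proof. by []. Qed.

Lemma preval_rec f g b G v n : preval f v b -> computes g G ->
  preval (PRec f g) (n :: v) (primrec b G n v).
Proof.
move=> Hf Hg; elim: n => [|n IH]; first exact: ev_rec0.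
exact: ev_recS IH (Hg _).
Qed.

Lemma preval_min f F v n : computes f F -> F (n :: v) = 0 ->
  (forall j, j < n -> 0 < F (j :: v)) -> preval (PMin f) v n.
Proof.
move=> Hf F0 Fpos; apply: ev_min; first by rewrite -F0.
by move=> j /Fpos F_pos; exists (F (j :: v)).
Qed.

Definition add_prog := PRec (PProj 0) (PComp PSucc [:: PProj 1]).

Lemma add_prog_correct x y : preval add_prog [:: x; y] (x + y).
Proof.
have -> : x + y = primrec y (fun v => (nth 0 v 1).+1) x [:: y] by elim: x => //= x <-.
exact: preval_rec (ev_proj 0 _) (computes_succ (computes_proj 1)).
Qed.

Definition mul_prog := PRec PZero (PComp add_prog [:: PProj 1; PProj 2]).

Lemma mul_prog_correct x y : preval mul_prog [:: x; y] (x * y).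
Proof.
have -> : x * y = primrec 0 (fun v => nth 0 v 1 + nth 0 v 2) x [:: y].
  by elim: x => //= x <-; rewrite mulSn addnC.
apply: preval_rec (ev_zero _) _.
exact: computes_op2 add_prog_correct (computes_proj 1) (computes_proj 2).
Qed.

Definition pow2_prog := PRec (PComp PSucc [:: PZero]) (PComp add_prog [:: PProj 1; PProj 1]).

Lemma pow2_prog_correct x : preval pow2_prog [:: x] (2 ^ x).
Proof.
have -> : 2 ^ x = primrec 1 (fun v => nth 0 v 1 + nth 0 v 1) x [::].
  by elim: x => //= x <-; rewrite expnS mul2n addnn.
apply: preval_rec (computes_succ computes_zero _) _.
exact: computes_op2 add_prog_correct (computes_proj 1) (computes_proj 1).
Qed.

Definition pred_prog := PRec PZero (PProj 0).

Lemma pred_prog_correct x : preval pred_prog [:: x] x.-1.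
Proof.
have -> : x.-1 = primrec 0 (nth 0 ^~ 0) x [::] by case: x.
exact: preval_rec (ev_zero _) (computes_proj 0).
Qed.

Definition sub_prog := PRec (PProj 0) (PComp pred_prog [:: PProj 1]).

Lemma sub_prog_correct x y : preval sub_prog [:: y; x] (x - y).
Proof.
have -> : x - y = primrec x (fun v => (nth 0 v 1).-1) y [:: x].
  by elim: y => /= [|y <-]; rewrite ?subn0 ?subnS.
exact: preval_rec (ev_proj 0 _) (computes_op1 pred_prog_correct (computes_proj 1)).
Qed.

Inductive aexp :=
| AVar of nat
| ANum of nat
| AAdd of aexp & aexp
| AMul of aexp & aexp
| APow2 of aexp
| ASub of aexp & aexp.

Fixpoint aeval (e : aexp) (v : seq nat) : nat :=
  match e with
  | AVar j => nth 0 v j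
  | ANum n => n
  | AAdd a b => aeval a v + aeval b v
  | AMul a b => aeval a v * aeval b v
  | APow2 a => 2 ^ aeval a v
  | ASub a b => aeval a v - aeval b v
  end.

Fixpoint num_prog (n : nat) : prcode :=
  if n is n'.+1 then PComp PSucc [:: num_prog n'] else PZero.

Lemma num_prog_correct n : computes (num_prog n) (fun _ => n).
Proof. by elim: n => [|n IH]; [exact: computes_zero | exact: computes_succ]. Qed.

Fixpoint compile (e : aexp) : prcode :=
  match e with
  | AVar j => PProj j
  | ANum n => num_prog n
  | AAdd a b => PComp add_prog [:: compile a; compile b]
  | AMul a b => PComp mul_prog [:: compile a; compile b]
  | APow2 a => PComp pow2_prog [:: compile a]
  | ASub a b => PComp sub_prog [:: compile b; compile a]
  end.

Lemma compile_correct e : computes (compile e) (aeval e).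
Proof.
elim: e => /= [j|n|a Ha b Hb|a Ha b Hb|a Ha|a Ha b Hb].
- exact: computes_proj.
- exact: num_prog_correct.
- exact: computes_op2 add_prog_correct Ha Hb.
- exact: computes_op2 mul_prog_correct Ha Hb.
- exact: computes_op1 pow2_prog_correct Ha.
- exact: computes_op2 (fun y x => sub_prog_correct x y) Hb Ha.
Qed.

Definition acons (a s : aexp) := AMul (APow2 a) (AAdd (AAdd s s) (ANum 1)).

Lemma aeval_acons a s v : aeval (acons a s) v = 2 ^ aeval a v * (aeval s v).*2.+1.
Proof. by rewrite /= addnn addn1. Qed.

Definition acode (l : seq aexp) := foldr acons (ANum 0) l.

Lemma aeval_acode l v : aeval (acode l) v = CodeSeq.code [seq aeval a v | a <- l].
Proof. by elim: l => //= a l IH; rewrite -IH addnn addn1. Qed.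

Definition adist (a b : aexp) := AAdd (ASub a b) (ASub b a).

Lemma aeval_adist_eq0 a b v : (aeval (adist a b) v == 0) = (aeval a v == aeval b v).
Proof. by rewrite /= addn_eq0 !subn_eq0 eqn_leq. Qed.

End PartialRecursiveFunctions.

Section SecondComponent.
Local Open Scope nat_scope.
Local Notation code := CodeSeq.code.

Lemma lt_code x s : x \in s -> x < code s.
Proof. exact: allP (CodeSeq.ltn_code s) x. Qed.

(* Positional variables: [code_test_base] reads [:: b; N]; [code_test_step]
   reads [:: a; z; b; N], with [z] the value at stage [a]. *)
Definition code_test_base := adist (AVar 1) (acode [:: ANum 0; AVar 0]).
Definition code_test_found := adist (AVar 3) (acode [:: AAdd (ANum 1) (AVar 0); AVar 2]).
Definition code_test_step := AMul (AVar 1) code_test_found.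

Lemma code_test_spec a b N :
  reflect (exists2 j, j <= a & code [:: j; b] = N)
    (primrec (aeval code_test_base [:: b; N]) (aeval code_test_step) a [:: b; N] == 0).
Proof.
elim: a => [|a IH].
  rewrite primrec0 aeval_adist_eq0 aeval_acode -[[seq _ | _ <- _]]/[:: 0; b].
  rewrite -[aeval _ _]/N eq_sym.
  apply: (iffP eqP) => [<-|[j]]; first by exists 0.
  by rewrite leqn0 => /eqP ->.
rewrite primrecS -[aeval code_test_step _]/(_ * aeval code_test_found _) muln_eq0.
rewrite aeval_adist_eq0 aeval_acode -[[seq _ | _ <- _]]/[:: a.+1; b] -[aeval (AVar 3) _]/N.
apply: (iffP orP) => [[found_a|/eqP ->]|[j]].
- by have [j le_ja codeN] := IH found_a; exists j => //; apply: leqW.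
- by exists a.+1.
rewrite leq_eqVlt => /predU1P[-> <-|le_ja codeN]; first by right.
by left; apply/IH; exists j.
Qed.

Definition code_test :=
  PComp (PRec (compile code_test_base) (compile code_test_step))
    [:: PProj 1; PProj 0; PProj 1].

Definition snd_code_prog := PMin code_test.

Lemma snd_code_prog_correct j b : preval snd_code_prog [:: code [:: j; b]] b.
Proof.
set N := code [:: j; b].
pose F v := primrec (aeval code_test_base [:: nth 0 v 0; nth 0 v 1])
  (aeval code_test_step) (nth 0 v 1) [:: nth 0 v 0; nth 0 v 1].
have code_test_correct : computes code_test F.
  move=> v; apply: ev_comp (preval_rec _ (compile_correct _ _) (compile_correct _)).
  by do 3 apply: evs_cons (ev_proj _ _) _; apply: evs_nil.
apply: preval_min code_test_correct _ _.
  apply/eqP/code_test_spec; exists j => //.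
  by apply: ltnW; apply: lt_code; rewrite mem_head.
move=> b' lt_b'b; rewrite lt0n; apply/code_test_spec => -[j' _].
move/(congr1 CodeSeq.decode); rewrite !CodeSeq.codeK => -[_ b'_b].
by rewrite b'_b ltnn in lt_b'b.
Qed.

End SecondComponent.

Section TermCodes.
Local Open Scope nat_scope.
Local Notation code := CodeSeq.code.
Variable k : nat.
Local Notation symbol := (nat + (nat + 'I_k))%type.

Lemma pickle_termE (t : term k) :
  pickle t = code (map pickle (GenTree.encode (term_enc t))).
Proof. by []. Qed.

Lemma pickle_varE n :
  pickle (inr (inl n) : symbol) = code [:: 0; code [:: code [:: code [:: n]; 0]]].
Proof. by []. Qed.

Lemma pickle_pairE (a b : term k) : pickle (a, b) = code [:: pickle a; pickle b].
Proof. by []. Qed.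

Lemma pickle_dioph_def (E : dioph_def k) : pickle E = code (map pickle E).
Proof. by []. Qed.

Lemma pickle_dimE m (E : dioph_def k) : pickle (m, E) = code [:: m; pickle E].
Proof. by []. Qed.

Lemma mem_encode_tvars (t : term k) v :
  v \in tvars t -> (inr (inl v) : symbol) \in GenTree.encode (term_enc t).
Proof.
elim: t => //= [a IHa b IHb|a IHa b IHb].
- by rewrite mem_cat => /orP[/IHa|/IHb] v_ab;
    rewrite in_cons mem_rcons in_cons /= cats0 mem_cat v_ab ?orbT.
- by rewrite mem_cat => /orP[/IHa|/IHb] v_ab;
    rewrite in_cons mem_rcons in_cons /= cats0 mem_cat v_ab ?orbT.
Qed.

Lemma lt_pickle_var v : v < pickle (inr (inl v) : symbol).
Proof.
have lt1 : v < code [:: v] by apply: lt_code; rewrite mem_head.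
have lt2 : code [:: v] < code [:: code [:: v]; 0] by apply: lt_code; rewrite mem_head.
have lt3 : code [:: code [:: v]; 0] < code [:: code [:: code [:: v]; 0]].
  by apply: lt_code; rewrite mem_head.
rewrite pickle_varE (ltn_trans lt1 (ltn_trans lt2 (ltn_trans lt3 _))) //.
by apply: lt_code; rewrite !inE eqxx orbT.
Qed.

Lemma tvars_lt_pickle (t : term k) v : v \in tvars t -> v < pickle t.
Proof.
move=> /mem_encode_tvars /(map_f pickle) /lt_code; rewrite -pickle_termE.
exact: ltn_trans (lt_pickle_var v).
Qed.

Lemma dioph_vars_lt_pickle (m : nat) (E : dioph_def k) e v :
  e \in E -> v \in tvars e.1 ++ tvars e.2 -> v < pickle (m, E).
Proof.
move=> eE v_e; have lt_e_E : pickle e < pickle E.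
  by rewrite pickle_dioph_def; apply/lt_code/map_f.
have lt_E_mE : pickle E < pickle (m, E).
  by rewrite pickle_dimE; apply: lt_code; rewrite !inE eqxx orbT.
apply: ltn_trans lt_E_mE; apply: ltn_trans lt_e_E; case: e {eE} v_e => a b.
rewrite pickle_pairE mem_cat => /orP[] /tvars_lt_pickle /ltn_trans; apply;
  by apply: lt_code; rewrite !inE eqxx ?orbT.
Qed.

Lemma leq_pickle_dim (m : nat) (E : dioph_def k) : m <= pickle (m, E).
Proof. by rewrite pickle_dimE ltnW // lt_code // mem_head. Qed.

End TermCodes.

Section CommutationProgram.
Local Open Scope nat_scope.
Local Notation code := CodeSeq.code.
Variable k : nat.
Local Notation symbol := (nat + (nat + 'I_k))%type.

Lemma pickle_commutation_eqn n i :
  pickle (commutation_eqn n i) =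
  code [:: code [:: pickle (inl 4 : symbol); pickle (inr (inl n) : symbol);
                    pickle (inr (inr i) : symbol); pickle (inl 0 : symbol)];
           code [:: pickle (inl 4 : symbol); pickle (inr (inr i) : symbol);
                    pickle (inr (inl n) : symbol); pickle (inl 0 : symbol)]].
Proof. by []. Qed.

Definition avar_code :=
  acode [:: ANum 0; acode [:: acode [:: acode [:: AVar 0]; ANum 0]]].

Definition acommutation_eqn (i : 'I_k) :=
  let s := fun x : symbol => ANum (pickle x) in
  acode [:: acode [:: s (inl 4); avar_code; s (inr (inr i)); s (inl 0)];
            acode [:: s (inl 4); s (inr (inr i)); avar_code; s (inl 0)]].

Lemma aeval_acommutation_eqn i n v :
  aeval (acommutation_eqn i) (n :: v) = pickle (commutation_eqn n i).
Proof.
rewrite pickle_commutation_eqn pickle_varE.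
by do !rewrite ?aeval_acode ?map_cons.
Qed.

Definition acommutation_step :=
  foldr (fun i => acons (acommutation_eqn i)) (AVar 1) (enum 'I_k).

Lemma aeval_acommutation_step n z v :
  aeval acommutation_step [:: n, z & v] =
  foldr (fun x s => 2 ^ x * s.*2.+1) z
    (map pickle [seq commutation_eqn n i | i <- enum 'I_k]).
Proof.
rewrite /acommutation_step; elim: (enum 'I_k) => [|i s IH]; first reflexivity.
by rewrite [foldr _ _ (i :: s)]/= aeval_acons aeval_acommutation_eqn IH map_cons.
Qed.

Lemma primrec_commutation_step (E : dioph_def k) n v :
  primrec (pickle E) (aeval acommutation_step) n v = pickle (commutation_eqns k n ++ E).
Proof.
elim: n => [|n IH]; first reflexivity.
rewrite primrecS aeval_acommutation_step IH !pickle_dioph_def [commutation_eqns k n.+1]/=.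
by rewrite -catA /CodeSeq.code !map_cat !foldr_cat.
Qed.

Definition commutation_prog :=
  PComp (PRec snd_code_prog (compile acommutation_step)) [:: PProj 0; PProj 0].

Lemma commutation_prog_correct (m : nat) (E : dioph_def k) :
  preval commutation_prog [:: pickle (m, E)]
    (pickle (commutation_eqns k (pickle (m, E)) ++ E)).
Proof.
apply: ev_comp (evs_cons (ev_proj 0 _) (evs_cons (ev_proj 0 _) (evs_nil _))) _.
rewrite -(primrec_commutation_step _ _ [:: pickle (m, E)]).
exact: preval_rec (snd_code_prog_correct _ _) (compile_correct _).
Qed.

End CommutationProgram.

Theorem mainTheorem9
  (k : nat) (K : fieldType) (d : 'I_k -> K -> K)
  (Hd : commuting_derivations d)
  (* the field of constants C, given as a field Cf with an embedding gamma
     whose image is exactly { f in K | d_1 f = ... = d_k f = 0 } *)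
  (Cf : fieldType) (gamma : {rmorphism Cf -> K})
  (HC : forall x : K, (forall i, d i x = 0) <-> exists c : Cf, gamma c = x)
  (* D = K(d_1,...,d_k), the left division ring of fractions of K[d_1..d_k] *)
  (D : unitRingType) (iota : {rmorphism K -> D}) (dd : 'I_k -> D)
  (HD : left_Ore_diff_fractions d iota dd)
  (* phi : C(t_1,...,t_k) -> K(d_1,...,d_k), the C-algebra morphism with
     phi(t_i) = d_i *)
  (phi : {rmorphism {fraction {mpoly Cf[k]}} -> D})
  (Hphi_C : forall c : Cf, phi ((c%:MP : {mpoly Cf[k]})%:F) = iota (gamma c))
  (Hphi_t : forall i : 'I_k, phi (('X_i : {mpoly Cf[k]})%:F) = dd i) :
  let t := fun i : 'I_k => (('X_i : {mpoly Cf[k]})%:F : {fraction {mpoly Cf[k]}}) in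
  diophantine_map t dd phi /\ effective_map t dd phi.
Proof.
move=> t.
have image_dioph m (E : dioph_def k) (z : 'I_m -> D) :
    cw_image phi (dioph_sat t E) z <->
    dioph_sat dd (commutation_eqns k (pickle (m, E)) ++ E) z.
  apply: cw_image_dioph_sat (leq_pickle_dim m E) (@dioph_vars_lt_pickle k m E).
  - exact: Hphi_t.
  - exact: fmorph_inj.
  - by move=> w /(centralizer_sub_image Hd HC HD Hphi_C Hphi_t).
split=> [m S [E SE]|].
  exists (commutation_eqns k (pickle (m, E)) ++ E) => z; rewrite -image_dioph.
  by split=> -[x [Sx zx]]; exists x; split=> //; apply/SE.
exists (commutation_prog k) => m E.
by exists (commutation_eqns k (pickle (m, E)) ++ E); split; [exact: commutation_prog_correct|].
Qed.
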